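(* In any execution of $\mathtt{search}(\mathcal{G},T)$ (defined in the context), let $\mathcal{G}'$ be the current subgame with top priority $p$, $\alpha\equiv p\pmod 2$, and let $(Z,\sigma)=\mathit{TAttr}^{\mathcal{G}',T'}_\alpha(\mathrm{pr}^{-1}(p)\cap V')$ be the computed region and strategy. Then every play in $\mathcal{G}'$ that is consistent with $\sigma$ and stays in $Z$ forever is won by player $\alpha$.
   Context: Parity games: $\mathcal{G}=(V_0,V_1,E,\mathrm{pr})$, $V=V_0\cup V_1$ finite, partitioned into vertices of Even ($0$) and Odd ($1$); $E\subseteq V\times V$ with every vertex having a successor; $\mathrm{pr}:V\to\{0,\dots,d\}$. $E(u)=\{v:(u,v)\in E\}$, $\mathrm{pr}(U)=\max_{u\in U}\mathrm{pr}(u)$, $\mathrm{pr}^{-1}(p)$ the set of vertices of priority $p$, $\overline{\alpha}=1-\alpha$. A play (infinite path) is won by Even iff the highest priority occurring infinitely often is even; a cycle is won by $\alpha$ if its highest priority has parity $\alpha$. A strategy of $\alpha$ is a partial function $\sigma$ on $V_\alpha$ with $\sigma(v)\in E(v)$; a play is consistent with $\sigma$ if every vertex $v\in\mathrm{dom}(\sigma)$ on it is followed by $\sigma(v)$. For $U\subseteq V$, $\mathcal{G}\cap U$ is the subgame with vertices $V\cap U$ and edges $E\cap(U\times U)$, and $\mathcal{G}\setminus U=\mathcal{G}\cap(V\setminus U)$. A $p$-tangle is a nonempty $U\subseteq V$ with $p=\mathrm{pr}(U)$ such that for $\alpha\equiv p\pmod 2$ there is a strategy $\sigma:U\cap V_\alpha\to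 U$ (witness strategy $\sigma_T(U)$) with $(U,E\cap(\sigma\cup((U\cap V_{\overline{\alpha}})\times U)))$ strongly connected and all its cycles won by $\alpha$ (''won by $\alpha$''). For a tangle $t$ won by $\alpha$ in a game with edge set $E$, $E_T(t)=\{v\notin t:\exists u\in t\cap V_{\overline{\alpha}},(u,v)\in E\}$. $T_\alpha$ denotes the tangles of $T$ won by $\alpha$; for a subgame $\mathcal{G}'$, $T\cap\mathcal{G}'$ denotes the tangles of $T$ contained in its vertex set. Tangle attractor: for a game $\mathcal{G}$ with vertices $V$, tangles $T$, player $\alpha$ and $A\subseteq V$, $\mathit{TAttr}^{\mathcal{G},T}_\alpha(A)$ is the least $Z\supseteq A$ containing every $v\in V_\alpha$ with $E(v)\cap Z\neq\emptyset$, every $v\in V_{\overline{\alpha}}$ with $E(v)\subseteq Z$, and every vertex of every $t\in T_\alpha$ with $\emptyset\neq E_T(t)\subseteq Z$ ($E_T$ computed in $\mathcal{G}$). It is computed iteratively together with a strategy $\sigma$ of $\alpha$ (initially empty): when an $\alpha$-vertex is added individually, $\sigma$ maps it to a successor already in $Z$; each $\alpha$-vertex of $A$ gets as $\sigma$-value a successor in $Z$ once one exists; when the vertices of a tangle $t$ are added, $\sigma(u):=\sigma_T(t)(u)$ for every $\alpha$-vertex $u\in t$ not yet in $\mathrm{dom}(\sigma)$. extract-tangles$(Z,\sigma)$, for a subgame $\mathcal{G}'=(V',E')$ with top priority $p$, $\alpha\equiv p$, region $Z\subseteq V'$ and strategy $\sigma$: let $Y$ be the greatest $X\subseteq Z$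 such that every $v\in X\cap V_{\overline{\alpha}}$ has $E'(v)\subseteq X$ and every $v\in X\cap V_\alpha$ has $\sigma(v)\in X$; let $H$ be the graph on $Y$ with edges $(v,\sigma(v))$ for $v\in Y\cap V_\alpha$ and $(v,w)\in E'$ for $v\in Y\cap V_{\overline{\alpha}}$; return all bottom strongly connected components of $H$ that contain at least one edge of $H$, each with witness strategy $\sigma$ restricted to it. $\mathtt{search}(\mathcal{G},T)$ (with $T$ a set of tangles of $\mathcal{G}$): repeat forever: set $r:=\emptyset$ (a partial function $V\to\mathbb{N}$, the region function) and $Y:=\emptyset$; while $V\setminus\mathrm{dom}(r)\neq\emptyset$: let $\mathcal{G}':=\mathcal{G}\setminus\mathrm{dom}(r)$ with vertex set $V'$, $T':=T\cap\mathcal{G}'$, $p:=\mathrm{pr}(\mathcal{G}')$, $\alpha:=p\bmod 2$; compute $(Z,\sigma):=\mathit{TAttr}^{\mathcal{G}',T'}_\alpha(\mathrm{pr}^{-1}(p)\cap V')$ (the region of priority $p$); let $A:=$ extract-tangles$(Z,\sigma)$; if some $t\in A$ has $E_T(t)=\emptyset$ with $E_T$ computed in the full game $\mathcal{G}$, return $(T\cup Y,t)$; otherwise set $r(v):=p$ for all $v\in Z$ and $Y:=Y\cup A$. After the while-loop, set $T:=T\cup Y$. *)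

From Stdlib Require Import Relations.
From mathcomp Require Import all_boot.

Set Implicit Arguments.
Unset Strict Implicit.
Unset Printing Implicit Defensive.

(* Players are booleans: false = Even (player 0), true = Odd (player 1).
   A game on the finite vertex type V is given by
     own : V -> bool   (own v = true  iff  v is a vertex of Odd),
     E   : rel V       (edge relation),
     pr  : V -> nat    (priorities).
   A subgame is given by its vertex set S : {set V}, with edges E restricted
   to S x S. *)

(* A tangle as a datum: its vertex set and its witness strategy
   (a total function, only relevant on the vertices of the tangle's winner). *)
Record tangle (V : finType) := Tangle { tv : {set V}; tw : V -> V }.

Section ParityGames.
Variables (V : finType) (own : V -> bool) (E : rel V) (pr : V -> nat).

Definition maxpr (U : {set V}) : nat := \max_(v in U) pr v.

Definition top_region (S : {set V}) : {set V} := [set v in S | pr v == maxpr S].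

Definition inf_often (pl : nat -> V) (v : V) : Prop :=
  forall n, exists m, n <= m /\ pl m = v.

Definition won_by (alpha : bool) (pl : nat -> V) : Prop :=
  exists v, inf_often pl v /\ odd (pr v) = alpha /\
            (forall w, inf_often pl w -> pr w <= pr v).

Definition strat := V -> option V.
Definition empty_strat : strat := fun _ => None.
Definition upd (sigma : strat) (v w : V) : strat :=
  fun x => if x == v then Some w else sigma x.

Definition consistent (sigma : strat) (pl : nat -> V) : Prop :=
  forall i w, sigma (pl i) = Some w -> pl i.+1 = w.

Definition talpha (t : tangle V) : bool := odd (maxpr (tv t)).

Definition tgraph (t : tangle V) : rel V :=
  fun u w => [&& u \in tv t, w \in tv t &
              if own u == talpha t then w == tw t u else E u w].

(* t is a (pr(U))-tangle of the full game (V, E) with witness tw t;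
   cycles are closed walks (nonempty c with mathcomp's [cycle]) *)
Definition is_tangle (t : tangle V) : Prop :=
  [/\ tv t != set0,
      (forall u, u \in tv t -> own u = talpha t -> E u (tw t u) /\ tw t u \in tv t),
      (forall u w, u \in tv t -> w \in tv t -> connect (tgraph t) u w) &
      (forall c : seq V, c != [::] -> cycle (tgraph t) c ->
          odd (\max_(v <- c) pr v) = talpha t)].

Definition escapes (S : {set V}) (t : tangle V) : {set V} :=
  [set v in S | (v \notin tv t) &&
     [exists u in tv t, (own u != talpha t) && E u v]].

Definition sub_tangles (T : tangle V -> Prop) (S : {set V}) : tangle V -> Prop :=
  fun t => T t /\ tv t \subset S.

Definition eager (A : {set V}) (alpha : bool) (Z : {set V}) (sigma : strat) : Prop :=
  forall v, v \in A -> own v = alpha -> sigma v = None ->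
    forall w, w \in Z -> ~~ E v w.

Definition tangle_upd (sigma : strat) (t : tangle V) (alpha : bool) : strat :=
  fun u => if [&& u \in tv t, own u == alpha & sigma u == None]
           then Some (tw t u) else sigma u.

Inductive tattr_step (S : {set V}) (T : tangle V -> Prop) (alpha : bool)
    (A : {set V}) : {set V} * strat -> {set V} * strat -> Prop :=
| ta_alpha (Z : {set V}) (sigma : strat) (v w : V) :
    v \in S -> v \notin Z -> own v = alpha -> w \in Z -> E v w ->
    eager A alpha Z sigma ->
    tattr_step S T alpha A (Z, sigma) (v |: Z, upd sigma v w)
| ta_opp (Z : {set V}) (sigma : strat) (v : V) :
    v \in S -> v \notin Z -> own v = ~~ alpha ->
    (forall w, w \in S -> E v w -> w \in Z) ->
    eager A alpha Z sigma ->
    tattr_step S T alpha A (Z, sigma) (v |: Z, sigma)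
| ta_tangle (Z : {set V}) (sigma : strat) (t : tangle V) :
    T t -> talpha t = alpha ->
    escapes S t != set0 -> escapes S t \subset Z -> ~~ (tv t \subset Z) ->
    eager A alpha Z sigma ->
    tattr_step S T alpha A (Z, sigma) (Z :|: tv t, tangle_upd sigma t alpha)
| ta_init (Z : {set V}) (sigma : strat) (v w : V) :
    v \in A -> own v = alpha -> sigma v = None -> w \in Z -> E v w ->
    tattr_step S T alpha A (Z, sigma) (Z, upd sigma v w).

Definition tattr (S : {set V}) (T : tangle V -> Prop) (alpha : bool)
    (A : {set V}) (Z : {set V}) (sigma : strat) : Prop :=
  clos_refl_trans _ (tattr_step S T alpha A) (A, empty_strat) (Z, sigma) /\
  (forall st, ~ tattr_step S T alpha A (Z, sigma) st).

Definition sclosed (S : {set V}) (alpha : bool) (sigma : strat) (X : {set V}) : bool :=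
  [forall v in X,
     if own v == alpha then (if sigma v is Some w then w \in X else false)
     else [forall w in S, E v w ==> (w \in X)]].

Definition ext_core (S : {set V}) (alpha : bool) (Z : {set V}) (sigma : strat)
  : {set V} :=
  \bigcup_(X : {set V} | (X \subset Z) && sclosed S alpha sigma X) X.

Definition hgraph (S : {set V}) (alpha : bool) (Z : {set V}) (sigma : strat) : rel V :=
  fun u w => [&& u \in ext_core S alpha Z sigma, w \in ext_core S alpha Z sigma &
              if own u == alpha then sigma u == Some w else E u w].

Definition bscc_edge (h : rel V) (B : {set V}) : Prop :=
  [/\ B != set0,
      (forall u w, u \in B -> w \in B -> connect h u w),
      (forall u w, u \in B -> h u w -> w \in B) &
      (exists u w, [/\ u \in B, w \in B & h u w])].

Definition extracted (S : {set V}) (alpha : bool) (Z : {set V}) (sigma : strat)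
    (t : tangle V) : Prop :=
  exists B : {set V}, [/\ B \subset ext_core S alpha Z sigma,
                bscc_edge (hgraph S alpha Z sigma) B &
                t = Tangle B (fun u => odflt u (sigma u))].

(* state: (T, dom r, Y) *)
Definition sstate := ((tangle V -> Prop) * {set V} * (tangle V -> Prop))%type.

Inductive search_step : sstate -> sstate -> Prop :=
| ss_inner (T : tangle V -> Prop) (D : {set V}) (Y : tangle V -> Prop) (Z : {set V}) (sigma : strat) :
    ~: D != set0 ->
    tattr (~: D) (sub_tangles T (~: D)) (odd (maxpr (~: D)))
          (top_region (~: D)) Z sigma ->
    (* no extracted tangle is closed in the full game (else search returns) *)
    (forall t, extracted (~: D) (odd (maxpr (~: D))) Z sigma t ->
               escapes setT t != set0) ->
    search_step (T, D, Y)
      (T, D :|: Z, fun t => Y t \/ extracted (~: D) (odd (maxpr (~: D))) Z sigma t)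
| ss_outer (T : tangle V -> Prop) (D : {set V}) (Y : tangle V -> Prop) :
    D = setT ->
    search_step (T, D, Y) (fun t => T t \/ Y t, set0, fun _ => False).

Definition search_reachable (T0 : tangle V -> Prop) (st : sstate) : Prop :=
  clos_refl_trans _ search_step (T0, set0, fun _ => False) st.

End ParityGames.

From Stdlib Require Import Relations.
From mathcomp Require Import all_boot boolp.

(* While the attractor is built, every attracted vertex gets a rank above
   those of the vertices already in the region, and the vertices attracted
   together with a tangle share one rank. A move that stays in the region and
   follows the strategy then either lowers the rank or is an edge of the
   tangle of the current rank. Hence a play consistent with the strategy that
   stays in the region either visits the top priority p infinitely often, or
   eventually moves inside a single alpha-tangle, all of whose cycles are won
   by alpha. That the tangles known to search are genuine tangles follows by
   induction along search: a cycle of an extracted bottom component, unrolled,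
   is a play of the first kind. *)

Set Implicit Arguments.
Unset Strict Implicit.
Unset Printing Implicit Defensive.

Lemma clos_rt_invariant (X : Type) (R : relation X) (P : X -> Prop) x y :
  (forall a b, R a b -> P a -> P b) -> clos_refl_trans X R x y -> P x -> P y.
Proof. by move=> step; elim=> [a b /step | // | a b c _ IHab _ IHbc /IHab/IHbc]. Qed.

Lemma nonincreasing_eventually_constant (f : nat -> nat) N :
  (forall m, N <= m -> f m.+1 <= f m) ->
  exists M, N <= M /\ forall m, M <= m -> f m = f M.
Proof.
move=> f_dec.
have f_reached : exists k, `[< exists2 m, N <= m & f m = k >].
  by exists (f N); apply/asboolP; exists N.
case: (ex_minnP f_reached) => k /asboolP [M NM <-] f_min.
exists M; split=> // m Mm; apply/eqP; rewrite eqn_leq; apply/andP; split.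
  have f_mono d : f (M + d) <= f M.
    elim: d => [|d IHd]; first by rewrite addn0.
    by rewrite addnS (leq_trans _ IHd) // f_dec // (leq_trans NM) ?leq_addr.
  by rewrite -(subnKC Mm) f_mono.
by apply: f_min; apply/asboolP; exists m => //; apply: leq_trans Mm.
Qed.

Section Plays.
Variables (V : finType) (pr : V -> nat).
Implicit Types (pl : nat -> V) (e : rel V).

Lemma eventually_inf_often pl :
  exists N, forall m, N <= m -> inf_often pl (pl m).
Proof.
have /fin_all_exists [last_visit Hlast] : forall v, exists n,
    inf_often pl v \/ forall m, n <= m -> pl m != v.
  move=> v; have [v_inf | /existsNP [n /forallNP not_after]] := pselect (inf_often pl v).
    by exists 0; left.
  by exists n; right => m nm; apply/eqP => pl_m; apply: (not_after m).
exists (\max_v last_visit v) => m m_large.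
have [//|never] := Hlast (pl m).
by have := never m (leq_trans (leq_bigmax _) m_large); rewrite eqxx.
Qed.

Lemma inf_often_top pl :
  exists v, inf_often pl v /\ forall w, inf_often pl w -> pr w <= pr v.
Proof.
have [N tail_inf] := eventually_inf_often pl.
have some_inf : `[< inf_often pl (pl N) >] by apply/asboolP/tail_inf.
case: (@arg_maxnP _ _ (fun v => `[< inf_often pl v >]) pr some_inf) => v /asboolP v_inf v_top.
by exists v; split=> // w /asboolP/v_top.
Qed.

Lemma path_of_play e pl m n :
  (forall i, m <= i < m + n -> e (pl i) (pl i.+1)) ->
  path e (pl m) [seq pl i | i <- iota m.+1 n].
Proof.
elim: n m => [//|n IHn] m steps /=.
rewrite steps ?leqnn ?addnS ?ltnS ?leq_addr //=; apply: IHn => i /andP [mi].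
by rewrite addSnnS => ilt; apply: steps; rewrite ltnW.
Qed.

Lemma cycle_of_play e pl m n :
  (forall i, m <= i < m + n -> e (pl i) (pl i.+1)) -> pl (m + n) = pl m ->
  cycle e [seq pl i | i <- iota m n].
Proof.
case: n => [//|n] steps loop /=.
have -> : rcons [seq pl i | i <- iota m.+1 n] (pl m) = [seq pl i | i <- iota m.+1 n.+1].
  by rewrite -loop addnS -addSn -map_rcons -cats1 -[[:: _]]/(iota (m.+1 + n) 1) -iotaD addn1.
exact: path_of_play.
Qed.

Lemma eventually_cycle_play_won e beta pl M :
  (forall c, c != [::] -> cycle e c -> odd (\max_(v <- c) pr v) = beta) ->
  (forall m, M <= m -> e (pl m) (pl m.+1)) -> won_by pr beta pl.
Proof.
move=> cycles_won steps.
have [N tail_inf] := eventually_inf_often pl.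
have [v [v_inf v_top]] := inf_often_top pl.
have [m1 [MN_m1 v_m1]] := v_inf (maxn M N).
have [m2 [m12 v_m2]] := v_inf m1.+1.
move: MN_m1; rewrite geq_max => /andP [Mm1 Nm1].
set c := [seq pl i | i <- iota m1 (m2 - m1)].
have c_cycle : cycle e c.
  apply: cycle_of_play; last by rewrite subnKC ?v_m1 ?v_m2 // ltnW.
  by move=> i /andP [m1i _]; apply: steps; apply: leq_trans m1i.
have c_max : \max_(x <- c) pr x = pr v.
  apply/eqP; rewrite eqn_leq; apply/andP; split.
    apply/bigmax_leqP_seq => x /mapP [i]; rewrite mem_iota => /andP [m1i _] -> _.
    by apply/v_top/tail_inf; apply: leq_trans m1i.
  rewrite -v_m1; apply: leq_bigmax_seq => //; apply: map_f.
  by rewrite mem_iota leqnn subnKC // ltnW.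
have c0 : c != [::] by rewrite -size_eq0 size_map size_iota subn_eq0 -ltnNge.
by exists v; split; last split; rewrite // -c_max cycles_won.
Qed.

Lemma cycle_nth e x0 c i :
  cycle e c -> i < size c -> e (nth x0 c i) (nth x0 c (i.+1 %% size c)).
Proof.
case: c => [//|x s] /= /pathP c_path i_lt.
move: (c_path x0 i); rewrite size_rcons -rcons_cons => /(_ i_lt).
rewrite !nth_rcons /= i_lt; case: ltngtP => [i_s | s_i | ->].
- by rewrite modn_small.
- by move: i_lt; rewrite ltnS leqNgt s_i.
- by rewrite modnn.
Qed.

Lemma cycle_parity_of_plays e beta :
  (forall pl, (forall i, e (pl i) (pl i.+1)) -> won_by pr beta pl) ->
  forall c, c != [::] -> cycle e c -> odd (\max_(v <- c) pr v) = beta.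
Proof.
move=> plays_won [//|x0 s] _; set c := x0 :: s => c_cycle.
pose pl i := nth x0 c (i %% size c).
have inf_c v : inf_often pl v <-> v \in c.
  split=> [/(_ 0) [m [_ <-]] | vc n]; first by rewrite mem_nth ?ltn_pmod.
  exists (n * size c + index v c); split.
    exact: leq_trans (leq_pmulr _ _) (leq_addr _ _).
  by rewrite /pl modnMDl modn_small ?index_mem // nth_index.
have [v [v_inf [v_odd v_top]]] : won_by pr beta pl.
  apply: plays_won => i; rewrite /pl -addn1 -modnDml addn1.
  exact: cycle_nth (ltn_pmod _ _).
rewrite -v_odd; congr odd; apply/eqP; rewrite eqn_leq; apply/andP; split.
  by apply/bigmax_leqP_seq => w wc _; apply/v_top/inf_c.
by apply: leq_bigmax_seq => //; apply/inf_c.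
Qed.

End Plays.

Section Graphs.
Variables (V : finType) (e : rel V).

Lemma cycle_through_edge x u w :
  connect e x u -> e u w -> connect e w x -> exists2 c, x \in c & cycle e c.
Proof.
move=> /connectP [p1 p1_path p1_last] e_uw /connectP [p2 p2_path p2_last].
exists (x :: p1 ++ belast w p2); first exact: mem_head.
rewrite /= rcons_cat {2}p2_last -lastI cat_path p1_path -p1_last /=.
by rewrite e_uw.
Qed.

Lemma connect_restrict (B : {set V}) x y :
  (forall u w, u \in B -> e u w -> w \in B) -> x \in B -> connect e x y ->
  connect [rel u w | (u \in B) && e u w] x y.
Proof.
move=> B_closed xB /connectP [p + ->]; elim: p x xB => [|z p IHp] x xB /=.
  by rewrite connect0.
case/andP=> e_xz z_path; apply: connect_trans (IHp z _ z_path).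
  by apply: connect1; rewrite /= xB.
exact: B_closed e_xz.
Qed.

End Graphs.

Section Attractor.
Variables (V : finType) (own : V -> bool) (E : rel V) (pr : V -> nat).
Variables (S : {set V}) (TT : tangle V -> Prop) (alpha : bool) (A : {set V}).
Hypothesis TT_tangle : forall t, TT t -> is_tangle own E pr t.
Hypothesis TT_sub : forall t, TT t -> tv t \subset S.
Implicit Types (Z : {set V}) (sigma : strat V).

Definition sound_strat Z sigma :=
  forall u w, sigma u = Some w -> [/\ u \in Z, own u = alpha & E u w].

Definition allows sigma v w := forall x, sigma v = Some x -> w = x.

Definition sub_strat sigma sigma' := forall u x, sigma u = Some x -> sigma' u = Some x.

(* [tg k] is the tangle through which the vertices of rank [k] were
   attracted; it is irrelevant for the ranks of single attracted vertices. *)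
Definition ranking Z sigma (rk : V -> nat) (tg : nat -> tangle V) :=
  forall v w, v \in Z -> v \notin A -> w \in S -> E v w -> allows sigma v w ->
    w \in Z /\ (rk w < rk v \/ [/\ rk w = rk v, TT (tg (rk v)),
                   talpha pr (tg (rk v)) = alpha & tgraph own E pr (tg (rk v)) v w]).

Definition attractor_inv Z sigma :=
  [/\ A \subset Z, Z \subset S, sound_strat Z sigma &
      exists rk tg, ranking Z sigma rk tg].

Lemma sound_strat_notin Z sigma v : sound_strat Z sigma -> v \notin Z -> sigma v = None.
Proof. by case Hv: (sigma v) => [w|//] /(_ v w Hv) [vZ _ _]; rewrite vZ. Qed.

Lemma sound_strat_upd Z Z' sigma v w :
  Z \subset Z' -> sound_strat Z sigma -> v \in Z' -> own v = alpha -> E v w ->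
  sound_strat Z' (upd sigma v w).
Proof.
move=> ZZ' sound vZ' ov Evw u x; rewrite /upd.
case: eqP => [-> [<-] // | _ /sound [uZ ou Eux]].
by split=> //; apply: (subsetP ZZ').
Qed.

Lemma sub_strat_upd sigma v w : sigma v = None -> sub_strat sigma (upd sigma v w).
Proof. by move=> sv u x; rewrite /upd; case: eqP => // ->; rewrite sv. Qed.

Lemma sub_strat_tangle_upd sigma t : sub_strat sigma (tangle_upd own sigma t alpha).
Proof. by move=> u x su; rewrite /tangle_upd su; case: ifP => // /and3P []. Qed.

Lemma ranking_extend Z Z' sigma sigma' rk tg t :
  Z \subset Z' -> sub_strat sigma sigma' -> ranking Z sigma rk tg ->
  (forall v w, v \in Z' -> v \notin Z -> w \in S -> E v w -> allows sigma' v w ->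
     w \in Z \/ [/\ w \in Z', TT t, talpha pr t = alpha & tgraph own E pr t v w]) ->
  exists rk' tg', ranking Z' sigma' rk' tg'.
Proof.
move=> ZZ' sub rank new; pose fresh := (\max_(u in Z) rk u).+1.
have rk_fresh u : u \in Z -> rk u < fresh by move=> uZ; rewrite ltnS leq_bigmax_cond.
exists (fun u => if u \in Z then rk u else fresh), (fun k => if k == fresh then t else tg k).
move=> v w vZ' vA wS Evw allow.
have [vZ | vZ] := boolP (v \in Z).
  have [wZ step] := rank v w vZ vA wS Evw (fun x sx => allow x (sub v x sx)).
  by rewrite (subsetP ZZ') // wZ (ltn_eqF (rk_fresh v vZ)).
rewrite eqxx.
case: (new v w vZ' vZ wS Evw allow) => [wZ | [wZ' Tt t_alpha t_vw]].
  by rewrite (subsetP ZZ') // wZ; split=> //; left; apply: rk_fresh.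
by case: ifP => wZ; split=> //; [left; apply: rk_fresh | right].
Qed.

Lemma tangle_attract_inv Z sigma t :
  TT t -> talpha pr t = alpha -> escapes own E pr S t \subset Z ->
  attractor_inv Z sigma -> attractor_inv (Z :|: tv t) (tangle_upd own sigma t alpha).
Proof.
move=> Tt t_alpha esc_Z [AZ ZS sound [rk [tg rank]]].
have [_ t_strat _ _] := TT_tangle Tt.
have ZtZ := subsetUl Z (tv t).
split; [exact: subset_trans AZ ZtZ | by rewrite subUset ZS TT_sub | | ].
  move=> u x; rewrite /tangle_upd; case: ifP => [/and3P [ut /eqP ou _] [<-] | _].
    by rewrite inE ut orbT; have [] := t_strat u ut (etrans ou (esym t_alpha)).
  by move=> /sound [uZ ou Eux]; rewrite (subsetP ZtZ).
apply: (ranking_extend (t := t) ZtZ (@sub_strat_tangle_upd sigma t) rank).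
move=> v w /setUP [-> // | vt] vZ wS Evw allow.
have strat_move : own v = alpha -> w = tw t v.
  move=> ov; apply: allow.
  by rewrite /tangle_upd vt ov eqxx (sound_strat_notin sound vZ).
have [wt | wt] := boolP (w \in tv t).
  right; split; rewrite ?inE ?wt ?orbT // /tgraph vt wt t_alpha /=.
  by case: eqP => [/strat_move -> |].
left; apply: (subsetP esc_Z); rewrite inE wS wt /=.
apply/existsP; exists v; rewrite vt t_alpha Evw andbT /=.
apply/eqP => ov; move: wt; rewrite (strat_move ov).
by have [_ ->] := t_strat v vt (etrans ov (esym t_alpha)).
Qed.

Lemma tattr_step_inv st st' : tattr_step own E pr S TT alpha A st st' ->
  attractor_inv st.1 st.2 -> attractor_inv st'.1 st'.2.
Proof.
case=> {st st'} Z sigma /=.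
- move=> v w vS vZ ov wZ Evw _ [AZ ZS sound [rk [tg rank]]].
  have ZvZ := subsetU1 v Z.
  split; [exact: subset_trans AZ ZvZ | by rewrite subUset sub1set vS ZS |
          exact: sound_strat_upd ZvZ sound (setU11 v Z) ov Evw | ].
  apply: (ranking_extend (t := tg 0) ZvZ (sub_strat_upd w (sound_strat_notin sound vZ)) rank).
  move=> v' w' /setU1P [-> _ _ _ allow | /[swap] /negP //].
  by left; rewrite (allow w) // /upd eqxx.
- move=> v vS vZ ov succ_Z _ [AZ ZS sound [rk [tg rank]]].
  have ZvZ := subsetU1 v Z.
  split; [exact: subset_trans AZ ZvZ | by rewrite subUset sub1set vS ZS | | ].
    by move=> u x /sound [uZ ou Eux]; rewrite (subsetP ZvZ).
  apply: (ranking_extend (t := tg 0) ZvZ (fun u x => id) rank).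
  move=> v' w' /setU1P [-> _ wS Evw _ | /[swap] /negP //].
  by left; apply: succ_Z.
- by move=> t Tt t_alpha _ esc_Z _ _; apply: tangle_attract_inv.
- move=> v w vA ov sv wZ Evw [AZ ZS sound [rk [tg rank]]].
  split=> //; first exact: sound_strat_upd (subxx Z) sound (subsetP AZ v vA) ov Evw.
  apply: (ranking_extend (t := tg 0) (subxx Z) (sub_strat_upd w sv) rank).
  by move=> v' w' ->.
Qed.

Hypothesis A_top : A \subset top_region pr S.
Hypothesis alpha_top : odd (maxpr pr S) = alpha.

Lemma tattr_inv Z sigma :
  clos_refl_trans _ (tattr_step own E pr S TT alpha A) (A, @empty_strat V) (Z, sigma) ->
  attractor_inv Z sigma.
Proof.
move=> reach.
apply: (clos_rt_invariant (P := fun st => attractor_inv st.1 st.2) _ reach).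
  exact: tattr_step_inv.
split=> //=.
- by apply/subsetP => a /(subsetP A_top); rewrite inE => /andP [].
- by exists (fun _ => 0), (fun _ => Tangle set0 id) => v w ->.
Qed.

Lemma attractor_play_won Z sigma pl : attractor_inv Z sigma ->
  (forall i, pl i \in Z /\ E (pl i) (pl i.+1)) -> consistent sigma pl ->
  won_by pr alpha pl.
Proof.
move=> [_ ZS _ [rk [tg rank]]] play cons.
have [N tail_inf] := eventually_inf_often pl.
have [[m [Nm Am]] | avoid_A] := pselect (exists m, N <= m /\ pl m \in A).
  move/(subsetP A_top): Am; rewrite inE => /andP [_ /eqP top].
  exists (pl m); split; [exact: tail_inf | split; first by rewrite top].
  move=> w /(_ 0) [k [_ <-]]; rewrite top; apply: leq_bigmax_cond.
  exact: (subsetP ZS) (play k).1.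
have step m : N <= m -> rk (pl m.+1) < rk (pl m) \/
    [/\ rk (pl m.+1) = rk (pl m), TT (tg (rk (pl m))),
        talpha pr (tg (rk (pl m))) = alpha & tgraph own E pr (tg (rk (pl m))) (pl m) (pl m.+1)].
  move=> Nm; have [Zm Em] := play m.
  have Am : pl m \notin A by apply/negP => Am; apply: avoid_A; exists m.
  exact: (rank _ _ Zm Am (subsetP ZS _ (play m.+1).1) Em (cons m)).2.
have [M [NM rk_const]] : exists M, N <= M /\ forall m, M <= m -> rk (pl m) = rk (pl M).
  by apply: nonincreasing_eventually_constant => m /step [/ltnW // | [-> _ _ _]].
pose t := tg (rk (pl M)).
have t_step m : M <= m -> [/\ TT t, talpha pr t = alpha & tgraph own E pr t (pl m) (pl m.+1)].
  move=> Mm; rewrite /t -(rk_const m Mm).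
  case: (step m (leq_trans NM Mm)) => [| [] //].
  by rewrite (rk_const m.+1 (leqW Mm)) (rk_const m Mm) ltnn.
have [Tt t_alpha _] := t_step M (leqnn M).
rewrite -t_alpha; apply: (@eventually_cycle_play_won _ _ (tgraph own E pr t) _ _ M).
  by have [_ _ _] := TT_tangle Tt.
by move=> m /t_step [].
Qed.

End Attractor.

Section ExtractTangles.
Variables (V : finType) (own : V -> bool) (E : rel V) (pr : V -> nat).
Variables (S : {set V}) (TT : tangle V -> Prop) (alpha : bool) (A : {set V}).
Hypothesis TT_tangle : forall t, TT t -> is_tangle own E pr t.
Hypothesis A_top : A \subset top_region pr S.
Hypothesis alpha_top : odd (maxpr pr S) = alpha.
Variables (Z : {set V}) (sigma : strat V).
Hypothesis Z_inv : attractor_inv own E pr S TT alpha A Z sigma.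

Local Notation C := (ext_core own E S alpha Z sigma).
Local Notation h := (hgraph own E S alpha Z sigma).

Lemma ext_core_strat u : u \in C -> u \in Z /\
  (own u = alpha -> exists2 w, sigma u = Some w & w \in C).
Proof.
case/bigcupP=> X /andP [XZ X_closed] uX; split; first exact: (subsetP XZ).
move=> ou; move/forallP/(_ u): (X_closed); rewrite uX ou eqxx /=.
case: (sigma u) => [w wX|//]; exists w => //.
by apply/bigcupP; exists X; rewrite ?XZ.
Qed.

Lemma hgraph_move u w : h u w -> [/\ u \in Z, E u w & allows sigma u w].
Proof.
case: Z_inv => _ _ sound _ /and3P [/ext_core_strat [uZ _] _].
case: eqP => [_ /eqP su | ou Euw].
  by have [_ _ Euw] := sound _ _ su; split=> // x; rewrite su => -[].
by split=> // x /sound [].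
Qed.

Lemma hgraph_cycle_parity c : c != [::] -> cycle h c -> odd (\max_(v <- c) pr v) = alpha.
Proof.
apply: cycle_parity_of_plays => pl h_steps.
apply: (attractor_play_won TT_tangle A_top alpha_top Z_inv).
  by move=> i; have [] := hgraph_move (h_steps i).
by move=> i; have [_ _] := hgraph_move (h_steps i).
Qed.

Section BottomComponent.
Variable B : {set V}.
Hypotheses (B_core : B \subset C) (B_bscc : bscc_edge h B).

Local Notation t := (Tangle B (fun u => odflt u (sigma u))).
Local Notation hB := [rel u w | (u \in B) && h u w].

Lemma extracted_alpha : talpha pr t = alpha.
Proof.
case: B_bscc => B0 B_conn B_closed [u0 [w0 [u0B w0B h_u0w0]]].
have [v vB v_max] : {v | v \in B & \max_(x in B) pr x = pr v}.
  by apply: eq_bigmax_cond; rewrite card_gt0.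
have hB_u0w0 : hB u0 w0 by rewrite /= u0B.
have [c vc c_cycle] := cycle_through_edge
  (connect_restrict B_closed vB (B_conn v u0 vB u0B)) hB_u0w0
  (connect_restrict B_closed w0B (B_conn w0 v w0B vB)).
have c0 : c != [::] by case: c vc {c_cycle}.
have cB x : x \in c -> x \in B by move=> /(next_cycle c_cycle) /andP [].
rewrite /talpha /maxpr /= v_max -(hgraph_cycle_parity c0 (sub_cycle _ c_cycle)).
  congr odd; apply/eqP; rewrite eqn_leq leq_bigmax_seq //=.
  by apply/bigmax_leqP_seq => x xc _; rewrite -v_max leq_bigmax_cond ?cB.
by move=> x y /andP [].
Qed.

Lemma tgraph_extracted : tgraph own E pr t =2 hB.
Proof.
case: B_bscc => _ _ B_closed _ u w; rewrite /tgraph /= extracted_alpha.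
case uB: (u \in B) => //=; have uC := subsetP B_core u uB.
have [wB | wB] := boolP (w \in B); last first.
  by apply/esym/negP => /(B_closed u w uB); rewrite (negbTE wB).
rewrite /hgraph uC (subsetP B_core w wB); case: eqP => //= ou.
by have [_ /(_ ou) [x -> _]] := ext_core_strat uC; rewrite eq_sym.
Qed.

Lemma extracted_is_tangle : is_tangle own E pr t.
Proof.
case: B_bscc => B0 B_conn B_closed _; split=> //.
- move=> u uB; rewrite extracted_alpha /= => ou; have uC := subsetP B_core u uB.
  have [_ /(_ ou) [x sx xC]] := ext_core_strat uC; rewrite sx /=.
  have h_ux : h u x by rewrite /hgraph uC xC ou eqxx sx /=.
  have [_ Eux _] := hgraph_move h_ux.
  by split=> //; apply: B_closed h_ux.
- move=> u w uB wB; rewrite (eq_connect tgraph_extracted).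
  exact: connect_restrict B_closed uB (B_conn u w uB wB).
- move=> c c0; rewrite (eq_cycle tgraph_extracted) extracted_alpha => c_cycle.
  by apply: hgraph_cycle_parity c0 (sub_cycle _ c_cycle) => x y /andP [].
Qed.

End BottomComponent.

Lemma extracted_tangle t : extracted own E S alpha Z sigma t -> is_tangle own E pr t.
Proof. by case=> B [B_core B_bscc ->]; exact: extracted_is_tangle. Qed.

End ExtractTangles.

Lemma top_tattr_inv (V : finType) (own : V -> bool) (E : rel V) (pr : V -> nat)
    (T : tangle V -> Prop) (S Z : {set V}) (sigma : strat V) :
  (forall t, T t -> is_tangle own E pr t) ->
  tattr own E pr S (sub_tangles T S) (odd (maxpr pr S)) (top_region pr S) Z sigma ->
  attractor_inv own E pr S (sub_tangles T S) (odd (maxpr pr S)) (top_region pr S) Z sigma.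
Proof.
move=> T_tangle [reach _].
by apply: (tattr_inv _ _ _ reach) => [t [/T_tangle] | t [] | ].
Qed.

Lemma search_tangles (V : finType) (own : V -> bool) (E : rel V) (pr : V -> nat)
    (T0 : tangle V -> Prop) (st : sstate V) :
  (forall t, T0 t -> is_tangle own E pr t) -> search_reachable own E pr T0 st ->
  (forall t, st.1.1 t -> is_tangle own E pr t) /\ (forall t, st.2 t -> is_tangle own E pr t).
Proof.
move=> T0_tangle reach.
apply: (clos_rt_invariant (P := fun st : sstate V =>
  (forall t, st.1.1 t -> is_tangle own E pr t) /\ (forall t, st.2 t -> is_tangle own E pr t))
  _ reach); last by split=> // t [].
move=> _ _ [T D Y Z sigma _ Z_tattr _ | T D Y _] /= [T_tangle Y_tangle].
  split=> // t [/Y_tangle // | ext].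
  apply: (extracted_tangle _ (subxx _) erefl (top_tattr_inv T_tangle Z_tattr) ext).
  by move=> t' [/T_tangle].
by split=> // t [/T_tangle | /Y_tangle].
Qed.

Theorem lemma2 (V : finType) (own : V -> bool) (E : rel V) (pr : V -> nat)
    (Htot : forall v, exists w, E v w)
    (T0 : tangle V -> Prop) (HT0 : forall t, T0 t -> is_tangle own E pr t)
    (T : tangle V -> Prop) (D : {set V}) (Y : tangle V -> Prop)
    (Hreach : search_reachable own E pr T0 (T, D, Y))
    (HS : ~: D != set0)
    (Z : {set V}) (sigma : V -> option V)
    (HZ : tattr own E pr (~: D) (sub_tangles T (~: D)) (odd (maxpr pr (~: D)))
            (top_region pr (~: D)) Z sigma)
    (pl : nat -> V)
    (Hplay : forall i, pl i \in Z /\ E (pl i) (pl i.+1))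
    (Hcons : consistent sigma pl) :
  won_by pr (odd (maxpr pr (~: D))) pl.
Proof.
have [T_tangle _] := search_tangles HT0 Hreach.
apply: (attractor_play_won _ (subxx _) erefl (top_tattr_inv T_tangle HZ) Hplay Hcons).
by move=> t [/T_tangle].
Qed.
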